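(* In the Mahi-Mahi protocol, if an honest validator directly commits some block in a leader slot $s$, then no other honest validator decides to skip the slot $s$ (neither directly nor indirectly).
   Context: Setting: $n=3f+1$ validators, at most $f$ Byzantine; honest validators create exactly one block per round, Byzantine ones may equivocate. Each valid block of round $r$ references (parents) at least $2f+1$ blocks of round $r-1$. Each validator has a local DAG of valid blocks, containing a block only with all its causal history. There is a path from $b$ to $b'$ if $b'$ is reached from $b$ along parent references. A block $b$ of round $r'$ is a vote for a block $L$ of round $r<r'$ with author $a$ if the first block with author $a$ and round $r$ met in the deterministic depth-first search from $b$ is $L$. With wave length $w\in\{4,5\}$, a block of round $r+w-1$ is a certificate for a block $L$ of round $r$ if at least $2f+1$ of its parents are votes for $L$. Leader slots of round $r$ are pairs (validator, $r$) chosen by a global common coin, identical for all validators, totally ordered by round then coin order. A validator classifies slots: direct skip if its local DAG has $2f+1$ blocks of round $r+w-2$ that are not votes for the block $L$ in the slot; direct commit of $L$ if it has $2f+1$ round-$(r+w-1)$ certificates for $L$; otherwise the indirect rule: with anchor the first slot (in slot order) of round $>r+w-1$ not classified as skip, if the anchor is committed with block $A$, commit $L$ if there is a certificate $c$ for $L$ with a path from $A$ to $c$, else skip; if the anchor is undecided, the slot is undecided. *)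

From mathcomp Require Import all_boot.

(* Data of a protocol execution: validators, the (finite) universe of all
   valid blocks ever created, their author / round / ordered parent list,
   the parameter f (n = 3f+1), the wave length w, and the common-coin
   leader slots of each round (in coin order). *)
Record model := Model {
  validator : finType;
  block : finType;
  author : block -> validator;
  round : block -> nat;
  parents : block -> seq block;
  nf : nat;
  wave : nat;
  leaders : nat -> seq validator }.

Set Implicit Arguments. Unset Strict Implicit. Unset Printing Implicit Defensive.

Section Defs.

(* "at least 2f+1 blocks": blocks from at least 2f+1 distinct validators *)
Definition quorum (M : model) (S : {set block M}) : bool :=
  2 * nf M + 1 <= #|[set author M b | b in S]|.

(* deterministic depth-first search (preorder) from b, following parents in
   order; fuel = round b suffices since rounds decrease along parents.
   The order of first occurrences equals that of a DFS with a visited set. *)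
Fixpoint dfs_from (M : model) (k : nat) (b : block M) : seq (block M) :=
  match k with
  | 0 => [:: b]
  | k'.+1 => b :: flatten [seq @dfs_from M k' p | p <- parents M b]
  end.

Definition dfs (M : model) (b : block M) := @dfs_from M (round M b) b.

Definition first_met (M : model) (b : block M) (a : validator M) (r : nat)
  : option (block M) :=
  ohead [seq x <- @dfs M b | (author M x == a) && (round M x == r)].

Definition is_vote (M : model) (b L : block M) : bool :=
  (round M L < round M b) && (@first_met M b (author M L) (round M L) == Some L).

Definition is_certificate (M : model) (c L : block M) : bool :=
  (round M c == round M L + wave M - 1) &&
  quorum [set p | (p \in parents M c) && @is_vote M p L].

Definition slot_block (M : model) (a : validator M) (r : nat) (L : block M) : bool :=
  (author M L == a) && (round M L == r).

Definition dag_path (M : model) (b b' : block M) : bool :=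
  connect (fun x y => y \in parents M x) b b'.

Definition direct_skip (M : model) (D : {set block M}) (a : validator M) (r : nat) : bool :=
  quorum [set b in D | (round M b == r + wave M - 2) &&
                       [forall L, slot_block a r L ==> ~~ is_vote b L]].

Definition direct_commit (M : model) (D : {set block M}) (a : validator M) (r : nat)
  (L : block M) : bool :=
  slot_block a r L && quorum [set c in D | is_certificate c L].

Inductive status (T : Type) := Skip | Commit of T | Undecided.
Arguments Skip {T}. Arguments Undecided {T}.

Definition slot_lt (M : model) (a1 : validator M) (r1 : nat) (a2 : validator M) (r2 : nat) : bool :=
  (r1 < r2) || ((r1 == r2) && (index a1 (leaders M r1) < index a2 (leaders M r2))).

Definition is_anchor (M : model) (cl : validator M -> nat -> status (block M))
  (r : nat) (a' : validator M) (r' : nat) : Prop :=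
  [/\ r + wave M - 1 < r', a' \in leaders M r', cl a' r' <> Skip &
      forall a'' r'', r + wave M - 1 < r'' -> a'' \in leaders M r'' ->
        slot_lt a'' r'' a' r' -> cl a'' r'' = Skip].

Definition indirect_commit_witness (M : model) (a : validator M) (r : nat)
  (A L : block M) : Prop :=
  slot_block a r L /\ exists c, is_certificate c L /\ dag_path A c.

Definition rule_holds (M : model) (D : {set block M})
  (cl : validator M -> nat -> status (block M)) (a : validator M) (r : nat) : Prop :=
  [/\ direct_skip D a r -> cl a r = Skip,
      ~~ direct_skip D a r -> (exists L, direct_commit D a r L) ->
        exists2 L, direct_commit D a r L & cl a r = Commit L,
      ~~ direct_skip D a r -> ~ (exists L, direct_commit D a r L) ->
        (forall a' r', ~ is_anchor cl r a' r') -> cl a r = Undecided,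
      ~~ direct_skip D a r -> ~ (exists L, direct_commit D a r L) ->
        forall a' r', is_anchor cl r a' r' -> cl a' r' = Undecided -> cl a r = Undecided &
      ~~ direct_skip D a r -> ~ (exists L, direct_commit D a r L) ->
        forall a' r' A, is_anchor cl r a' r' -> cl a' r' = Commit A ->
          ((exists L, indirect_commit_witness a r A L) ->
             exists2 L, indirect_commit_witness a r A L & cl a r = Commit L) /\
          (~ (exists L, indirect_commit_witness a r A L) -> cl a r = Skip)].

Definition classification (M : model) (D : {set block M})
  (cl : validator M -> nat -> status (block M)) : Prop :=
  forall a r, a \in leaders M r -> rule_holds D cl a r.

End Defs.
Arguments Skip {T}. Arguments Undecided {T}.

(* A direct commit of L at slot (a, r) provides 2f+1 certificates for L, each
   with 2f+1 parents voting for L. Quorum intersection yields, in any quorum of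
   round r+w-2 blocks, an honest block that is one of these votes (honest
   validators create one block per round), so nobody sees a direct skip.
   Likewise every block of round at least r+w has an honest certificate for L
   among its parents, hence every block of a later slot reaches a certificate
   for L, and the indirect rule can never skip the slot. *)
From mathcomp Require Import all_boot.
From mathcomp Require Import zify.

Set Implicit Arguments.
Unset Strict Implicit.
Unset Printing Implicit Defensive.

Section ClassificationRule.

Variables (M : model) (D : {set block M}).
Variable cl : validator M -> nat -> status (block M).
Hypothesis cl_rule : classification D cl.

Lemma commit_slot_block a r A :
  a \in leaders M r -> cl a r = Commit A -> slot_block a r A.
Proof.
move=> Ha HA; apply/negPn/negP => notA.
have [R1 R2 R3 R4 R5] := cl_rule Ha.
have Hns : ~~ direct_skip D a r by apply/negP => /R1; rewrite HA.
have Hndc : ~ exists L, direct_commit D a r L.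
  by case/(R2 Hns) => L /andP [HL _]; rewrite HA => -[EAL]; rewrite EAL HL in notA.
suff : cl a r = Undecided by rewrite HA.
apply: R3 => // a' r' Hanc.
case Hst: (cl a' r') => [|A'|].
- by case: Hanc => _ _ /(_ Hst).
- have [Hwit Hnowit] := R5 Hns Hndc a' r' A' Hanc Hst.
  suff Hnw : ~ exists L, indirect_commit_witness a r A' L by rewrite Hnowit in HA.
  by case/Hwit => L [HL _]; rewrite HA => -[EAL]; rewrite EAL HL in notA.
- by rewrite (R4 Hns Hndc a' r' Hanc Hst) in HA.
Qed.

Lemma not_skip_of_witnesses a r :
  a \in leaders M r -> ~~ direct_skip D a r ->
  (forall A, r + wave M - 1 < round M A -> exists L, indirect_commit_witness a r A L) ->
  cl a r <> Skip.
Proof.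
move=> Ha Hns Hwit Hskip.
have [_ R2 R3 R4 R5] := cl_rule Ha.
have Hndc : ~ exists L, direct_commit D a r L.
  by case/(R2 Hns) => L _; rewrite Hskip.
suff : cl a r = Undecided by rewrite Hskip.
apply: R3 => // a' r' Hanc.
case Hst: (cl a' r') => [|A|].
- by case: Hanc => _ _ /(_ Hst).
- have [Hr' Ha' _ _] := Hanc.
  have /andP [_ /eqP HrA] := commit_slot_block Ha' Hst.
  have [Hcommit _] := R5 Hns Hndc a' r' A Hanc Hst.
  by have [L _] := Hcommit (Hwit A ltac:(lia)); rewrite Hskip.
- by rewrite (R4 Hns Hndc a' r' Hanc Hst) in Hskip.
Qed.

End ClassificationRule.

Lemma quorum_nonempty (M : model) (S : {set block M}) :
  quorum S -> exists b, b \in S.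
Proof.
rewrite /quorum => Q; apply/set0Pn; rewrite -card_gt0.
by apply: leq_trans (leq_imset_card (author M) S); apply: leq_trans Q; rewrite addn1.
Qed.

Section Quorums.

Variables (M : model) (byz : {set validator M}).
Hypothesis card_validator : #|validator M| = 3 * nf M + 1.
Hypothesis card_byz : #|byz| <= nf M.

Lemma quorum_inter_honest (S1 S2 : {set block M}) :
  quorum S1 -> quorum S2 ->
  exists b1 b2, [/\ b1 \in S1, b2 \in S2, author M b1 = author M b2 &
                    author M b1 \notin byz].
Proof.
rewrite /quorum; set X := [set author M b | b in S1]; set Y := [set author M b | b in S2].
move=> Q1 Q2.
have : ~~ (X :&: Y \subset byz).
  apply/negP => /subset_leq_card HXY.
  have := cardsU X Y; have : #|X :|: Y| <= #|validator M| by apply: max_card.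
  lia.
case/subsetPn => h /setIP [/imsetP [b1 Hb1 ->] /imsetP [b2 Hb2 E]] Hh.
by exists b1, b2; split.
Qed.

Hypothesis parent_round : forall b p, p \in parents M b -> round M p + 1 = round M b.
Hypothesis parents_quorum : forall b, 0 < round M b -> quorum [set p | p \in parents M b].
Hypothesis honest_unique : forall b1 b2, author M b1 \notin byz ->
  author M b1 = author M b2 -> round M b1 = round M b2 -> b1 = b2.

Lemma certificate_round c L : is_certificate c L -> round M c = round M L + wave M - 1.
Proof. by case/andP => /eqP. Qed.

Lemma direct_commit_no_direct_skip (D D' : {set block M}) a r L :
  1 < wave M -> direct_commit D a r L -> ~~ direct_skip D' a r.
Proof.
move=> Hw /andP [HL Qc]; apply/negP => Hds.
have [c] := quorum_nonempty Qc; rewrite inE => /andP [_ /andP [/eqP Hrc Qv]].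
have [b [p [Hb Hp Hbp Hhon]]] := quorum_inter_honest Hds Qv.
move: Hb; rewrite inE => /andP [_ /andP [/eqP Hrb /forallP Hnovote]].
move: Hp; rewrite inE => /andP [Hpc Hvote].
have HrL : round M L = r by case/andP: HL => _ /eqP.
have Hrp := parent_round Hpc.
have Ebp : b = p by apply: honest_unique => //; lia.
by move: (Hnovote L); rewrite HL Ebp Hvote.
Qed.

Section Certificates.

Variables (D : {set block M}) (L : block M).
Hypothesis certificates : quorum [set c in D | is_certificate c L].
Hypothesis wave_gt0 : 0 < wave M.

Lemma certificate_parent B :
  round M B = round M L + wave M -> exists2 c, is_certificate c L & c \in parents M B.
Proof.
move=> HB; have QB := parents_quorum (b := B) ltac:(lia).
have [p [c [Hp Hc Hpc Hhon]]] := quorum_inter_honest QB certificates.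
move: Hp Hc; rewrite !inE => Hp /andP [_ Hcert].
have Hrp := parent_round Hp; have Hrc := certificate_round Hcert.
have Epc : p = c by apply: honest_unique => //; lia.
by exists c => //; rewrite -Epc.
Qed.

Lemma certificate_reachable B :
  round M L + wave M <= round M B -> exists c, is_certificate c L /\ dag_path B c.
Proof.
move Hk : (round M B - (round M L + wave M)) => k; elim: k B Hk => [|k IH] B Hk HB.
  have [c Hc HcB] := certificate_parent (B := B) ltac:(lia).
  by exists c; split; last exact: connect1.
have [p] := quorum_nonempty (parents_quorum (b := B) ltac:(lia)); rewrite inE => Hp.
have HpB := parent_round Hp.
have [c [Hc Hpath]] := IH p ltac:(lia) ltac:(lia).
by exists c; split; last exact: connect_trans (connect1 _) Hpath.
Qed.

End Certificates.

End Quorums.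

Theorem lemma4 (M : model) (byz : {set validator M})
  (dag : validator M -> {set block M}) :
  #|validator M| = 3 * nf M + 1 ->
  #|byz| <= nf M ->
  (wave M = 4 \/ wave M = 5) ->
  (* parents of a block of round r are blocks of round r-1 *)
  (forall b p, p \in parents M b -> round M p + 1 = round M b) ->
  (* a block of round r > 0 references 2f+1 (distinct-author) blocks *)
  (forall b, 0 < round M b -> quorum [set p | p \in parents M b]) ->
  (* honest validators create at most one block per round *)
  (forall b1 b2, author M b1 \notin byz -> author M b1 = author M b2 ->
     round M b1 = round M b2 -> b1 = b2) ->
  (* local DAGs contain the causal history of their blocks *)
  (forall v b p, b \in dag v -> p \in parents M b -> p \in dag v) ->
  (forall r, uniq (leaders M r)) ->
  forall (v v' a : validator M) (r : nat) (L : block M)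
         (cl' : validator M -> nat -> status (block M)),
    v \notin byz -> v' \notin byz -> a \in leaders M r ->
    ~~ direct_skip (dag v) a r -> direct_commit (dag v) a r L ->
    classification (dag v') cl' ->
    cl' a r <> Skip.
Proof.
move=> HV Hbyz Hw Hpar Hq Hhon _ _ v v' a r L cl' _ _ Ha _ Hdc Hcl.
have Hw2 : 1 < wave M by case: Hw => ->.
have /andP [HL Qc] := Hdc.
have HrL : round M L = r by case/andP: HL => _ /eqP.
apply: (not_skip_of_witnesses Hcl Ha).
  exact: direct_commit_no_direct_skip HV Hbyz Hpar Hhon _ _ _ _ _ Hw2 Hdc.
move=> A HA; exists L; split => //.
by apply: (certificate_reachable HV Hbyz Hpar Hq Hhon Qc); lia.
Qed.
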